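(* Let $(W,\lambda)$ be an initial algebra of $N\otimes-$ on $\mathsf{SquaMS}$ and $V=C(W)$ its Cauchy completion. Then $V$ is isomorphic (in $\mathsf{SquaMS}$) to $U_0$ with the taxicab metric.
   Context: Let $M_0=\{(r,s)\in[0,1]^2: r\in\{0,1\}\text{ or } s\in\{0,1\}\}$. A square metric space is a pair $(X,S_X)$ with $X$ a metric space with all distances at most $2$ and $S_X\colon M_0\to X$ injective such that (sq1) for $i\in\{0,1\}$, $r,s\in[0,1]$: $d_X(S_X(i,r),S_X(i,s))=|s-r|$ and $d_X(S_X(r,i),S_X(s,i))=|s-r|$; (sq2) $d_X(S_X(r,s),S_X(t,u))\ge|r-t|+|s-u|$. $\mathsf{SquaMS}$: these objects, with short maps $f$ satisfying $f\circ S_X=S_Y$ as morphisms. Let $N=\{0,1,2\}^2$, also viewed as points of $\mathbb{R}^2$. For $X$ in $\mathsf{SquaMS}$, $N\otimes X=(N\times X)/\!\sim$, where $\sim$ is generated by $(m,S_X(p))\sim(n,S_X(q))$ whenever $m,n\in N$ differ by exactly $1$ in exactly one coordinate and $(m+p)/3=(n+q)/3$; $n\otimes x$ is the class of $(n,x)$. With $d((a,u),(b,v))=\frac13 d_X(u,v)$ if $a=b$ and $2$ otherwise, $N\otimes X$ gets the quotient metric. $S_{N\otimes X}(p)=n\otimes S_X(3p-n)$ for any $n\in N$ with $p\in(n+[0,1]^2)/3$; $(N\otimes f)(n\otimes x)=n\otimes f(x)$. The Cauchy completion $C(X)$ has $S_{C(X)}(p)$ the class of the constant sequence $S_X(p)$.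 $U_0=[0,1]^2$ with the taxicab metric $|x-x'|+|y-y'|$ and $S_{U_0}$ the inclusion of $M_0$. *)

From Stdlib Require Import Reals Lra Relations ClassicalEpsilon.
From Coquelicot Require Import Coquelicot.
Open Scope R_scope.

(* A "pre-object": carrier, distance, and the boundary map S : M0 -> X,
   given as a total function R -> R -> X of which only the values on M0
   are ever used. *)
Record sqdata := SqData {
  sq_car : Type;
  sq_dist : sq_car -> sq_car -> R;
  sq_map : R -> R -> sq_car }.

Definition inI (x : R) : Prop := 0 <= x <= 1.
Definition inM0 (r s : R) : Prop :=
  inI r /\ inI s /\ (r = 0 \/ r = 1 \/ s = 0 \/ s = 1).

Definition is_metric (X : Type) (d : X -> X -> R) : Prop :=
  (forall x y, d x y = 0 <-> x = y) /\
  (forall x y, d x y = d y x) /\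
  (forall x y z, d x z <= d x y + d y z).

Definition IsSquaMS (X : sqdata) : Prop :=
  is_metric (sq_car X) (sq_dist X) /\
  (forall x y, sq_dist X x y <= 2) /\
  (forall r s t u, inM0 r s -> inM0 t u -> sq_map X r s = sq_map X t u ->
     r = t /\ s = u) /\
  (forall i r s, (i = 0 \/ i = 1) -> inI r -> inI s ->
     sq_dist X (sq_map X i r) (sq_map X i s) = Rabs (s - r) /\
     sq_dist X (sq_map X r i) (sq_map X s i) = Rabs (s - r)) /\
  (forall r s t u, inM0 r s -> inM0 t u ->
     sq_dist X (sq_map X r s) (sq_map X t u) >= Rabs (r - t) + Rabs (s - u)).

Definition is_hom (X Y : sqdata) (f : sq_car X -> sq_car Y) : Prop :=
  (forall x y, sq_dist Y (f x) (f y) <= sq_dist X x y) /\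
  (forall r s, inM0 r s -> f (sq_map X r s) = sq_map Y r s).

Definition sq_iso (X Y : sqdata) : Prop :=
  exists (f : sq_car X -> sq_car Y) (g : sq_car Y -> sq_car X),
    is_hom X Y f /\ is_hom Y X g /\
    (forall x, g (f x) = x) /\ (forall y, f (g y) = y).

Inductive three := T0 | T1 | T2.
Definition t2R (t : three) : R := match t with T0 => 0 | T1 => 1 | T2 => 2 end.
Definition N : Type := (three * three)%type.

Definition N_eq_dec (m n : N) : {m = n} + {m <> n}.
Proof. repeat decide equality. Defined.

Definition adjacent (m n : N) : Prop :=
  (fst m = fst n /\ Rabs (t2R (snd m) - t2R (snd n)) = 1) \/
  (snd m = snd n /\ Rabs (t2R (fst m) - t2R (fst n)) = 1).

Definition tgen (X : sqdata) (a b : N * sq_car X) : Prop :=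
  exists r s t u, inM0 r s /\ inM0 t u /\
    snd a = sq_map X r s /\ snd b = sq_map X t u /\
    adjacent (fst a) (fst b) /\
    (t2R (fst (fst a)) + r) / 3 = (t2R (fst (fst b)) + t) / 3 /\
    (t2R (snd (fst a)) + s) / 3 = (t2R (snd (fst b)) + u) / 3.

Definition teqv (X : sqdata) := clos_refl_sym_trans _ (tgen X).

(* the quotient (N x X)/~ as the set of equivalence classes *)
Definition tcar (X : sqdata) : Type :=
  { A : N * sq_car X -> Prop | exists a, forall b, A b <-> teqv X a b }.

Definition tcls (X : sqdata) (a : N * sq_car X) : tcar X :=
  exist _ (fun b => teqv X a b) (ex_intro _ a (fun b => iff_refl _)).

Definition tbase (X : sqdata) (a b : N * sq_car X) : R :=
  if N_eq_dec (fst a) (fst b) then sq_dist X (snd a) (snd b) / 3 else 2.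

(* chains x_1 -> y_1 ~ x_2 -> y_2 ~ ... -> y_k, with total cost
   sum_i d(x_i, y_i) *)
Inductive tchain (X : sqdata) : N * sq_car X -> N * sq_car X -> R -> Prop :=
| tch_one a b : tchain X a b (tbase X a b)
| tch_step a b b' c e :
    teqv X b b' -> tchain X b' c e -> tchain X a c (tbase X a b + e).

Definition tdist (X : sqdata) (A B : tcar X) : R :=
  real (Glb_Rbar (fun e => exists a b,
          proj1_sig A a /\ proj1_sig B b /\ tchain X a b e)).

(* choice of a cell n with p in (n + [0,1]^2)/3 *)
Definition tidx (r : R) : three :=
  if Rlt_dec r (1/3) then T0 else if Rlt_dec r (2/3) then T1 else T2.

Definition tsqm (X : sqdata) (r s : R) : tcar X :=
  tcls X ((tidx r, tidx s),
          sq_map X (3 * r - t2R (tidx r)) (3 * s - t2R (tidx s))).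

Definition tensor (X : sqdata) : sqdata := SqData (tcar X) (tdist X) (tsqm X).

Definition trep (X : sqdata) (A : tcar X) : N * sq_car X :=
  proj1_sig (constructive_indefinite_description _ (proj2_sig A)).

Definition tensor_map (X Y : sqdata) (f : sq_car X -> sq_car Y)
  (A : sq_car (tensor X)) : sq_car (tensor Y) :=
  tcls Y (fst (trep X A), f (snd (trep X A))).

Definition is_initial_algebra (W : sqdata)
  (lam : sq_car (tensor W) -> sq_car W) : Prop :=
  is_hom (tensor W) W lam /\
  forall (Y : sqdata) (alpha : sq_car (tensor Y) -> sq_car Y),
    IsSquaMS Y -> is_hom (tensor Y) Y alpha ->
    exists! h : sq_car W -> sq_car Y,
      is_hom W Y h /\ (forall z, h (lam z) = alpha (tensor_map W Y h z)).

Definition cauchy (X : sqdata) (u : nat -> sq_car X) : Prop :=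
  forall eps, eps > 0 -> exists M, forall m n, (M <= m)%nat -> (M <= n)%nat ->
    sq_dist X (u m) (u n) < eps.

Definition ceqv (X : sqdata) (u v : nat -> sq_car X) : Prop :=
  cauchy X u /\ cauchy X v /\ is_lim_seq (fun n => sq_dist X (u n) (v n)) 0.

Definition ccar (X : sqdata) : Type :=
  { A : (nat -> sq_car X) -> Prop |
      exists u, cauchy X u /\ forall v, A v <-> ceqv X u v }.

Definition crep (X : sqdata) (A : ccar X) : nat -> sq_car X :=
  proj1_sig (constructive_indefinite_description _ (proj2_sig A)).

Definition cdist (X : sqdata) (A B : ccar X) : R :=
  real (Lim_seq (fun n => sq_dist X (crep X A n) (crep X B n))).

Lemma const_cauchy (X : sqdata) (H : IsSquaMS X) (x : sq_car X) :
  cauchy X (fun _ => x).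
Proof.
  destruct H as [[Hd _] _]. intros eps He. exists 0%nat. intros m n _ _.
  rewrite (proj2 (Hd x x) eq_refl). lra.
Qed.

Definition csqm (X : sqdata) (H : IsSquaMS X) (r s : R) : ccar X :=
  exist _ (fun v => ceqv X (fun _ => sq_map X r s) v)
    (ex_intro _ (fun _ => sq_map X r s)
       (conj (const_cauchy X H (sq_map X r s)) (fun v => iff_refl _))).

Definition completion (X : sqdata) (H : IsSquaMS X) : sqdata :=
  SqData (ccar X) (cdist X) (csqm X H).

Definition U0car : Type := { p : R * R | inI (fst p) /\ inI (snd p) }.

Definition clamp (x : R) : R := Rmax 0 (Rmin 1 x).

Lemma clamp_in (x : R) : inI (clamp x).
Proof.
  unfold inI, clamp, Rmax, Rmin.
  destruct (Rle_dec 1 x); destruct (Rle_dec 0 _); lra.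
Qed.

Definition U0dist (p q : U0car) : R :=
  Rabs (fst (proj1_sig p) - fst (proj1_sig q)) +
  Rabs (snd (proj1_sig p) - snd (proj1_sig q)).

(* the inclusion of M0 (clamped outside [0,1]^2, where it is irrelevant) *)
Definition U0map (r s : R) : U0car :=
  exist _ (clamp r, clamp s) (conj (clamp_in r) (clamp_in s)).

Definition U0 : sqdata := SqData U0car U0dist U0map.

(* Initiality gives an algebra morphism h : W -> U0, for the algebra structure
   n (x) p |-> (n + p) / 3 on U0, and an induction principle: every point of W lies in
   a cell lambda(n (x) w).  Write dh x y for the taxicab distance of h x and h y, so
   dh <= d.  On the boundary S(M0) equality holds, because the opposite sides are at
   distance 1 along a set of heights closed under t |-> (b + t) / 3, hence dense.  If
   d <= dh + gamma everywhere, join x to y by a walk through cells that passes from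
   cell to cell through boundary points lying on a taxicab geodesic; the excess is
   gamma / 3 in the first and in the last cell and zero in between, so
   d <= dh + 2 gamma / 3.  Iterating from gamma = 2 shows that h is an isometry.  Its
   image is dense, so it extends to an isometry from the completion of W onto U0. *)

From Pilot Require Import Defs.
From Stdlib Require Import Reals Lra Lia Relations ClassicalEpsilon.
From Stdlib Require Import FunctionalExtensionality PropExtensionality ProofIrrelevance.
From Coquelicot Require Import Coquelicot.
Open Scope R_scope.

Lemma sig_ext {A : Type} {P : A -> Prop} (u v : {x | P x}) :
  proj1_sig u = proj1_sig v -> u = v.
Proof. apply eq_sig_hprop; intros; apply proof_irrelevance. Qed.

Lemma sig_pred_ext {T : Type} {Q : (T -> Prop) -> Prop} (u v : {A : T -> Prop | Q A}) :
  (forall b, proj1_sig u b <-> proj1_sig v b) -> u = v.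
Proof.
  intros H. apply sig_ext. extensionality b. apply propositional_extensionality, H.
Qed.

Section SquareMetric.
Variable X : sqdata.
Hypothesis HX : IsSquaMS X.
Local Notation d := (sq_dist X).
Local Notation S := (sq_map X).

Lemma dist_xx x : d x x = 0.
Proof. apply (proj1 HX); reflexivity. Qed.

Lemma dist_sym x y : d x y = d y x.
Proof. apply (proj1 HX). Qed.

Lemma dist_triangle x y z : d x z <= d x y + d y z.
Proof. apply (proj1 HX). Qed.

Lemma dist_ge0 x y : 0 <= d x y.
Proof.
  pose proof (dist_triangle x y x). rewrite dist_xx, (dist_sym y x) in H. lra.
Qed.

Lemma dist_le2 x y : d x y <= 2.
Proof. apply (proj2 HX). Qed.

Lemma dist_S_vedge i r s : (i = 0 \/ i = 1) -> inI r -> inI s ->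
  d (S i r) (S i s) = Rabs (s - r).
Proof. intros Hi Hr Hs. apply (proj1 (proj2 (proj2 (proj2 HX))) i r s); auto. Qed.

Lemma dist_S_hedge i r s : (i = 0 \/ i = 1) -> inI r -> inI s ->
  d (S r i) (S s i) = Rabs (s - r).
Proof. intros Hi Hr Hs. apply (proj1 (proj2 (proj2 (proj2 HX))) i r s); auto. Qed.

End SquareMetric.

Lemma inM0_inI r s : inM0 r s -> inI r /\ inI s.
Proof. intros [Hr [Hs _]]; auto. Qed.

Lemma inM0_vedge i t : (i = 0 \/ i = 1) -> inI t -> inM0 i t.
Proof. unfold inM0, inI; intros [-> | ->] Ht; repeat split; lra. Qed.

Lemma inM0_hedge i t : (i = 0 \/ i = 1) -> inI t -> inM0 t i.
Proof. unfold inM0, inI; intros [-> | ->] Ht; repeat split; lra. Qed.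

Lemma inM0_00 : inM0 0 0.
Proof. apply inM0_vedge; unfold inI; lra. Qed.

(** * The quotient [N (x) X] *)

Lemma glb_real (P : R -> Prop) (L e0 : R) : P e0 -> (forall e, P e -> L <= e) ->
  L <= real (Glb_Rbar P) /\ (forall e, P e -> real (Glb_Rbar P) <= e).
Proof.
  intros H0 HL. destruct (Glb_Rbar_correct P) as [Hlb Hglb].
  assert (H1 : Rbar_le L (Glb_Rbar P)) by (apply Hglb; intros x Hx; apply HL; auto).
  assert (H2 : Rbar_le (Glb_Rbar P) e0) by (apply Hlb; auto).
  destruct (Glb_Rbar P) as [g| |]; simpl in *; try contradiction.
  split; [auto|]. intros e He. exact (Hlb e He).
Qed.

Section Tensor.
Variable X : sqdata.

Lemma tcls_eq a b : teqv X a b -> tcls X a = tcls X b.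
Proof.
  intros Hab. apply sig_pred_ext; simpl; intros c.
  split; intros H; eapply rst_trans; eauto using rst_sym.
Qed.

Lemma trep_spec (A : tcar X) b : proj1_sig A b <-> teqv X (trep X A) b.
Proof.
  unfold trep. destruct (constructive_indefinite_description _ _) as [a Ha]. apply Ha.
Qed.

Lemma trep_in (A : tcar X) : proj1_sig A (trep X A).
Proof. apply trep_spec, rst_refl. Qed.

Lemma tcls_trep (A : tcar X) : tcls X (trep X A) = A.
Proof. apply sig_pred_ext; intros b. symmetry. apply trep_spec. Qed.

Lemma trep_tcls a : teqv X a (trep X (tcls X a)).
Proof. exact (trep_in (tcls X a)). Qed.

Lemma tdist_ge (A B : tcar X) L :
  (forall a b e, proj1_sig A a -> proj1_sig B b -> tchain X a b e -> L <= e) ->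
  L <= tdist X A B.
Proof.
  intros HL. apply (glb_real _ L (tbase X (trep X A) (trep X B))).
  - exists (trep X A), (trep X B). repeat split; try apply trep_in. constructor.
  - intros e (a & b & Ha & Hb & Hc). eauto.
Qed.

Hypothesis HX : IsSquaMS X.

Lemma tchain_ge0 a b e : tchain X a b e -> 0 <= e.
Proof.
  assert (Hb : forall a b, 0 <= tbase X a b).
  { intros a' b'. unfold tbase. destruct N_eq_dec; [|lra].
    pose proof (dist_ge0 X HX (snd a') (snd b')). lra. }
  intros Hc. induction Hc; [apply Hb|]. pose proof (Hb a b). lra.
Qed.

Lemma tdist_le (A B : tcar X) a b e :
  proj1_sig A a -> proj1_sig B b -> tchain X a b e -> tdist X A B <= e.
Proof.
  intros Ha Hb Hc. apply (glb_real _ 0 e).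
  - exists a, b; auto.
  - intros e' (a' & b' & _ & _ & Hc'). eapply tchain_ge0; eauto.
  - exists a, b; auto.
Qed.

Lemma tdist_same_cell n u v :
  tdist X (tcls X (n, u)) (tcls X (n, v)) <= sq_dist X u v / 3.
Proof.
  eapply Rle_trans; [apply (tdist_le _ _ (n, u) (n, v)); try apply rst_refl; constructor|].
  unfold tbase; simpl. destruct (N_eq_dec n n); [lra | congruence].
Qed.

End Tensor.

Definition boundary_preserving (X Y : sqdata) (f : sq_car X -> sq_car Y) : Prop :=
  forall r s, inM0 r s -> f (sq_map X r s) = sq_map Y r s.

Definition cell_map {X Y : sqdata} (f : sq_car X -> sq_car Y)
  (a : Defs.N * sq_car X) : Defs.N * sq_car Y := (fst a, f (snd a)).

Section TensorFunctor.
Variables X Y : sqdata.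
Variable f : sq_car X -> sq_car Y.
Hypothesis Hf : boundary_preserving X Y f.

Lemma teqv_cell_map a b : teqv X a b -> teqv Y (cell_map f a) (cell_map f b).
Proof.
  intros H; induction H as [a b (r & s & t & u & H1 & H2 & H3 & H4 & H5)| | |].
  - apply rst_step. exists r, s, t, u. unfold cell_map; simpl.
    rewrite H3, H4, !Hf by auto. tauto.
  - apply rst_refl.
  - apply rst_sym; auto.
  - eapply rst_trans; eauto.
Qed.

Lemma tensor_map_tcls a : tensor_map X Y f (tcls X a) = tcls Y (cell_map f a).
Proof.
  apply tcls_eq. apply (teqv_cell_map _ _ (rst_sym _ _ _ _ (trep_tcls X a))).
Qed.

Lemma tensor_map_comp Z (g : sq_car Z -> sq_car X) A :
  tensor_map X Y f (tensor_map Z X g A) = tensor_map Z Y (fun z => f (g z)) A.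
Proof. apply tensor_map_tcls. Qed.

Lemma tdist_tensor_map : IsSquaMS Y -> is_hom X Y f ->
  forall A B, tdist Y (tensor_map X Y f A) (tensor_map X Y f B) <= tdist X A B.
Proof.
  intros HY [Hs _].
  assert (Hbase : forall a b, tbase Y (cell_map f a) (cell_map f b) <= tbase X a b).
  { intros a b. unfold tbase, cell_map; simpl. destruct N_eq_dec; [|lra].
    specialize (Hs (snd a) (snd b)). lra. }
  assert (Hchain : forall a b e, tchain X a b e ->
            exists e', e' <= e /\ tchain Y (cell_map f a) (cell_map f b) e').
  { intros a b e Hc. induction Hc as [a b|a b b' c e Hbb' Hc [e' [He' Hc']]].
    - eexists; split; [apply Hbase | constructor].
    - eexists; split; [|eapply tch_step; [apply teqv_cell_map, Hbb' | exact Hc']].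
      pose proof (Hbase a b). lra. }
  intros A B. apply tdist_ge. intros a b e Ha Hb Hc.
  destruct (Hchain a b e Hc) as [e' [He' Hc']].
  eapply Rle_trans; [|exact He'].
  apply (tdist_le Y HY _ _ (cell_map f a) (cell_map f b)); auto;
    apply teqv_cell_map, trep_spec; assumption.
Qed.

End TensorFunctor.

Lemma tensor_map_id X A : tensor_map X X (fun x => x) A = A.
Proof. unfold tensor_map. rewrite <- surjective_pairing. apply tcls_trep. Qed.

(** * The algebra [U0] *)

Lemma clamp_id x : inI x -> clamp x = x.
Proof. unfold inI, clamp, Rmax, Rmin; intros; repeat destruct Rle_dec; lra. Qed.

Definition ux (u : U0car) : R := fst (proj1_sig u).
Definition uy (u : U0car) : R := snd (proj1_sig u).

Lemma ux_in u : inI (ux u). Proof. exact (proj1 (proj2_sig u)). Qed.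
Lemma uy_in u : inI (uy u). Proof. exact (proj2 (proj2_sig u)). Qed.

Lemma U0_eq (u v : U0car) : ux u = ux v -> uy u = uy v -> u = v.
Proof.
  destruct u as [[a b] p], v as [[c e] q]; unfold ux, uy; simpl; intros -> ->.
  apply sig_ext; reflexivity.
Qed.

Lemma ux_U0map r s : inI r -> ux (U0map r s) = r.
Proof. apply clamp_id. Qed.

Lemma uy_U0map r s : inI s -> uy (U0map r s) = s.
Proof. apply clamp_id. Qed.

Lemma U0_is_square : IsSquaMS U0.
Proof.
  refine (conj (conj _ (conj _ _)) (conj _ (conj _ (conj _ _)))); simpl; unfold U0dist.
  - intros x y; split; [|intros ->; split_Rabs; lra].
    intros H. apply U0_eq; unfold ux, uy; split_Rabs; lra.
  - intros; split_Rabs; lra.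
  - intros; split_Rabs; lra.
  - intros [[x1 x2] [h1 h2]] [[y1 y2] [k1 k2]]; unfold inI in *; simpl in *; split_Rabs; lra.
  - intros r s t u H1 H2 H.
    destruct (inM0_inI r s H1), (inM0_inI t u H2).
    split; [rewrite <- (ux_U0map r s), H by auto; apply ux_U0map
           | rewrite <- (uy_U0map r s), H by auto; apply uy_U0map]; auto.
  - intros i r s Hi Hr Hs.
    assert (inI i) by (unfold inI; destruct Hi; lra).
    fold (ux (U0map i r)) (ux (U0map i s)) (uy (U0map i r)) (uy (U0map i s))
         (ux (U0map r i)) (ux (U0map s i)) (uy (U0map r i)) (uy (U0map s i)).
    rewrite !ux_U0map, !uy_U0map by auto. split; split_Rabs; lra.
  - intros r s t u H1 H2. destruct (inM0_inI r s H1), (inM0_inI t u H2).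
    fold (ux (U0map r s)) (ux (U0map t u)) (uy (U0map r s)) (uy (U0map t u)).
    rewrite !ux_U0map, !uy_U0map by auto. lra.
Qed.

Definition third (n : three) (x : R) : R := (t2R n + x) / 3.

Lemma third_in n x : inI x -> inI (third n x).
Proof. destruct n; unfold inI, third, t2R; lra. Qed.

Definition U0_shrink (a : Defs.N * U0car) : U0car :=
  exist _ (third (fst (fst a)) (ux (snd a)), third (snd (fst a)) (uy (snd a)))
    (conj (third_in _ _ (ux_in (snd a))) (third_in _ _ (uy_in (snd a)))).

Lemma ux_shrink a : ux (U0_shrink a) = third (fst (fst a)) (ux (snd a)).
Proof. reflexivity. Qed.

Lemma uy_shrink a : uy (U0_shrink a) = third (snd (fst a)) (uy (snd a)).
Proof. reflexivity. Qed.

Lemma U0_shrink_teqv a b : teqv U0 a b -> U0_shrink a = U0_shrink b.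
Proof.
  intros H; induction H as [a b (r & s & t & u & H1 & H2 & H3 & H4 & _ & E1 & E2)| | |];
    try congruence.
  destruct (inM0_inI r s H1), (inM0_inI t u H2).
  apply U0_eq; rewrite ?ux_shrink, ?uy_shrink; change (sq_car U0) with U0car in *;
    rewrite H3, H4; unfold third; [rewrite !ux_U0map | rewrite !uy_U0map]; auto.
Qed.

Lemma U0dist_coords u v : U0dist u v = Rabs (ux u - ux v) + Rabs (uy u - uy v).
Proof. reflexivity. Qed.

Lemma U0_shrink_short a b : U0dist (U0_shrink a) (U0_shrink b) <= tbase U0 a b.
Proof.
  rewrite U0dist_coords. unfold tbase. destruct N_eq_dec as [e|e].
  - change (sq_dist U0) with U0dist.
    rewrite U0dist_coords, !ux_shrink, !uy_shrink. unfold third.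
    destruct a as [[a1 a2] p], b as [[b1 b2] q]; simpl in e |- *. injection e as -> ->.
    split_Rabs; lra.
  - pose proof (ux_in (U0_shrink a)). pose proof (ux_in (U0_shrink b)).
    pose proof (uy_in (U0_shrink a)). pose proof (uy_in (U0_shrink b)).
    unfold inI in *. split_Rabs; lra.
Qed.

Lemma U0_shrink_chain a b e : tchain U0 a b e -> U0dist (U0_shrink a) (U0_shrink b) <= e.
Proof.
  intros Hc; induction Hc as [|a b b' c e Hbb' _ IH]; [apply U0_shrink_short|].
  pose proof (dist_triangle U0 U0_is_square (U0_shrink a) (U0_shrink b') (U0_shrink c)).
  pose proof (U0_shrink_short a b). rewrite (U0_shrink_teqv _ _ Hbb') in *. simpl in *. lra.
Qed.

Definition U0_alg (A : tcar U0) : U0car := U0_shrink (trep U0 A).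

Lemma U0_alg_tcls a : U0_alg (tcls U0 a) = U0_shrink a.
Proof. symmetry. apply U0_shrink_teqv, trep_tcls. Qed.

Lemma tidx_in r : inI r -> inI (3 * r - t2R (tidx r)).
Proof. unfold tidx, inI; intros; repeat destruct Rlt_dec; simpl; lra. Qed.

Lemma tidx_M0 r s : inM0 r s -> inM0 (3 * r - t2R (tidx r)) (3 * s - t2R (tidx s)).
Proof.
  intros [Hr [Hs Hd]]. split; [apply tidx_in; auto|]. split; [apply tidx_in; auto|].
  destruct Hd as [-> | [-> | [-> | ->]]]; unfold tidx; repeat destruct Rlt_dec; simpl;
    lra.
Qed.

Lemma third_tidx r : third (tidx r) (3 * r - t2R (tidx r)) = r.
Proof. unfold third. field. Qed.

Lemma U0_alg_hom : is_hom (tensor U0) U0 U0_alg.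
Proof.
  split.
  - intros A B; simpl. apply tdist_ge. intros a b e Ha Hb Hc.
    unfold U0_alg. rewrite (U0_shrink_teqv _ _ (proj1 (trep_spec _ A a) Ha)),
      (U0_shrink_teqv _ _ (proj1 (trep_spec _ B b) Hb)).
    apply U0_shrink_chain; auto.
  - intros r s H. simpl. unfold tsqm. rewrite U0_alg_tcls.
    destruct (inM0_inI r s H), (inM0_inI _ _ (tidx_M0 r s H)).
    apply U0_eq; rewrite ?ux_shrink, ?uy_shrink; simpl;
      [rewrite !ux_U0map | rewrite !uy_U0map]; auto using third_tidx.
Qed.

(** * Induction over an initial algebra *)

Section SubSquare.
Variable W : sqdata.
Variable P : sq_car W -> Prop.
Hypothesis HS : forall r s, inM0 r s -> P (sq_map W r s).

Definition sub_car : Type := {w : sq_car W | P w}.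

Definition sub_map (r s : R) : sub_car :=
  match excluded_middle_informative (inM0 r s) with
  | left h => exist _ (sq_map W r s) (HS r s h)
  | right _ => exist _ (sq_map W 0 0) (HS 0 0 inM0_00)
  end.

Definition sub_square : sqdata :=
  SqData sub_car (fun x y => sq_dist W (proj1_sig x) (proj1_sig y)) sub_map.

Lemma sub_map_val : boundary_preserving sub_square W (@proj1_sig _ _).
Proof.
  intros r s H. simpl. unfold sub_map.
  destruct excluded_middle_informative; [reflexivity | contradiction].
Qed.

Lemma sub_square_is_square : IsSquaMS W -> IsSquaMS sub_square.
Proof.
  intros [[Hd [Hs Ht]] [Hle2 [Hinj [Hsq1 Hsq2]]]].
  pose proof sub_map_val as Hv; unfold boundary_preserving in Hv; simpl in Hv.
  refine (conj (conj _ (conj _ _)) (conj _ (conj _ (conj _ _)))); simpl; auto.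
  - intros x y; split; [intros H; apply sig_ext, Hd; auto | intros ->; apply Hd; auto].
  - intros r s t u H1 H2 H. apply Hinj; auto.
    rewrite <- (Hv r s H1), <- (Hv t u H2), H. reflexivity.
  - intros i r s Hi Hr Hs'. rewrite !(Hv i), !(Hv _ i);
      auto using inM0_vedge, inM0_hedge.
  - intros r s t u H1 H2. rewrite !Hv; auto.
Qed.

Variable lam : sq_car (tensor W) -> sq_car W.
Hypothesis HL : forall n w, P w -> P (lam (tcls W (n, w))).

Definition sub_alg (z : tcar sub_square) : sub_car :=
  exist _ (lam (tensor_map sub_square W (@proj1_sig _ _) z))
    (HL _ _ (proj2_sig (snd (trep _ z)))).

Lemma sub_alg_hom : IsSquaMS W -> is_hom (tensor W) W lam ->
  is_hom (tensor sub_square) sub_square sub_alg.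
Proof.
  intros HW [Hl1 Hl2]. split.
  - intros A B. simpl. eapply Rle_trans; [apply Hl1|]. simpl.
    apply tdist_tensor_map; auto using sub_map_val.
    split; [intros x y; simpl; lra | apply sub_map_val].
  - intros r s H. apply sig_ext. simpl. rewrite sub_map_val by auto.
    unfold tsqm. rewrite tensor_map_tcls by apply sub_map_val. unfold cell_map; simpl.
    rewrite sub_map_val by (apply tidx_M0; auto).
    apply (Hl2 r s H).
Qed.

End SubSquare.

(* The inclusion of the subalgebra [P], composed with the morphism that initiality
   provides into it, is an algebra endomorphism of [W], hence the identity. *)
Lemma initial_algebra_ind W lam (HW : IsSquaMS W) (Hini : is_initial_algebra W lam)
  (P : sq_car W -> Prop)
  (HS : forall r s, inM0 r s -> P (sq_map W r s))
  (HL : forall n w, P w -> P (lam (tcls W (n, w)))) :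
  forall w, P w.
Proof.
  destruct Hini as [Hlam Hu].
  destruct (Hu _ _ (sub_square_is_square W P HS HW) (sub_alg_hom W P HS lam HL HW Hlam))
    as [k [[[Hk0 Hk1] Hk2] _]].
  destruct (Hu W lam HW Hlam) as [h0 [_ Huniq]].
  assert (E1 : h0 = fun w => w).
  { apply Huniq. split; [split; [intros; simpl; lra | intros; auto]|].
    intros z. rewrite tensor_map_id; auto. }
  assert (E2 : h0 = fun w => proj1_sig (k w)).
  { apply Huniq. split; [split|].
    - intros x y. apply Hk0.
    - intros r s H. rewrite Hk1 by auto. apply sub_map_val; auto.
    - intros z. rewrite Hk2. simpl. rewrite tensor_map_comp by apply sub_map_val.
      reflexivity. }
  intros w.
  rewrite <- (f_equal (fun g => g w) (eq_trans (eq_sym E2) E1) : proj1_sig (k w) = w).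
  apply proj2_sig.
Qed.

(** * Geometry of the initial algebra *)

Lemma small_pow (q : R) : 0 <= q < 1 -> forall eps, 0 < eps -> exists k, q ^ k < eps.
Proof.
  intros Hq eps He. destruct (pow_lt_1_zero q) with (y := eps) as [k Hk]; auto.
  { split_Rabs; lra. }
  exists k. specialize (Hk k (le_n k)). pose proof (Rle_abs (q ^ k)). lra.
Qed.

Lemma self_similar_dense (Q : R -> Prop) :
  Q 0 -> (forall b t, inI t -> Q t -> Q (third b t)) ->
  forall k t, inI t -> exists tau, inI tau /\ Q tau /\ Rabs (t - tau) <= (1/3) ^ k.
Proof.
  intros H0 HQ k. induction k as [|k IH]; intros t Ht.
  - exists 0. unfold inI in *. simpl. repeat split; auto; try lra. split_Rabs; lra.
  - destruct (IH (3 * t - t2R (tidx t)) (tidx_in t Ht)) as [tau [Htau [HQt Hd]]].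
    exists (third (tidx t) tau). split; [apply third_in; auto|]. split; [apply HQ; auto|].
    replace (t - third (tidx t) tau) with ((3 * t - t2R (tidx t) - tau) / 3)
      by (unfold third; field).
    simpl. split_Rabs; lra.
Qed.

Lemma t2R_lt_of_ne a b : a <> b -> t2R a <= t2R b -> t2R a < t2R b.
Proof. destruct a, b; simpl; intros; first [congruence | lra]. Qed.

Lemma t2R_adjacent a b x y : inI x -> inI y -> t2R a + x = t2R b + y ->
  a = b \/ Rabs (t2R a - t2R b) = 1.
Proof.
  unfold inI; intros Hx Hy H.
  destruct a, b; simpl in *; first [left; reflexivity | right; split_Rabs; lra | lra].
Qed.

Lemma tidx_third_corner c e : inI e -> (third c e = 0 \/ third c e = 1) ->
  tidx (third c e) = c.
Proof.
  unfold tidx, third, inI; intros He H.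
  destruct c; simpl in *; repeat destruct Rlt_dec; first [reflexivity | lra].
Qed.

Definition three_eq_dec (a b : three) : {a = b} + {a <> b}.
Proof. decide equality. Defined.

Definition succ3 (a : three) : three := match a with T0 => T1 | _ => T2 end.
Definition pred3 (a : three) : three := match a with T2 => T1 | _ => T0 end.
Definition t2N (a : three) : nat := match a with T0 => 0 | T1 => 1 | T2 => 2 end.
Definition gap3 (a b : three) : nat := (t2N a - t2N b) + (t2N b - t2N a).
Definition cell_gap (c m : Defs.N) : nat := (gap3 (fst c) (fst m) + gap3 (snd c) (snd m))%nat.

Lemma succ3_toward a b : t2R a < t2R b ->
  t2R (succ3 a) = t2R a + 1 /\ t2R a + 1 <= t2R b /\ (gap3 (succ3 a) b < gap3 a b)%nat.
Proof. destruct a, b; unfold gap3; simpl; intros; try lra; repeat split; lra || lia. Qed.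

Lemma pred3_toward a b : t2R b < t2R a ->
  t2R (pred3 a) = t2R a - 1 /\ t2R b + 1 <= t2R a /\ (gap3 (pred3 a) b < gap3 a b)%nat.
Proof. destruct a, b; unfold gap3; simpl; intros; try lra; repeat split; lra || lia. Qed.

Lemma cell_gap_0 c m : cell_gap c m = 0%nat -> c = m.
Proof.
  destruct c as [[] []], m as [[] []]; unfold cell_gap, gap3; simpl; intros;
    lia || reflexivity.
Qed.

Section Geometry.
Variable W : sqdata.
Variable lam : sq_car (tensor W) -> sq_car W.
Hypothesis HW : IsSquaMS W.
Hypothesis Hini : is_initial_algebra W lam.
Variable h : sq_car W -> U0car.
Hypothesis Hh : is_hom W U0 h.
Hypothesis Hhl : forall z, h (lam z) = U0_alg (tensor_map W U0 h z).

Local Notation d := (sq_dist W).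
Local Notation S := (sq_map W).
Local Notation hx w := (ux (h w)).
Local Notation hy w := (uy (h w)).
Local Notation dh x y := (U0dist (h x) (h y)).

Definition cell (c : Defs.N) (w : sq_car W) : sq_car W := lam (tcls W (c, w)).

Lemma h_S r s : inM0 r s -> hx (S r s) = r /\ hy (S r s) = s.
Proof.
  intros H. destruct (inM0_inI r s H). rewrite (proj2 Hh r s H).
  split; [apply ux_U0map | apply uy_U0map]; auto.
Qed.

Lemma h_cell c w :
  hx (cell c w) = third (fst c) (hx w) /\ hy (cell c w) = third (snd c) (hy w).
Proof.
  unfold cell. rewrite Hhl, tensor_map_tcls by exact (proj2 Hh).
  rewrite U0_alg_tcls. split; reflexivity.
Qed.

Lemma h_cell_S c e1 e2 : inM0 e1 e2 ->
  hx (cell c (S e1 e2)) = third (fst c) e1 /\ hy (cell c (S e1 e2)) = third (snd c) e2.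
Proof.
  intros H. destruct (h_cell c (S e1 e2)) as [-> ->], (h_S e1 e2 H) as [-> ->]. auto.
Qed.

Lemma dist_cell c u v : d (cell c u) (cell c v) <= d u v / 3.
Proof.
  eapply Rle_trans; [apply (proj1 (proj1 Hini))|]. apply tdist_same_cell; auto.
Qed.

Lemma S_cell r s : inM0 r s ->
  S r s = cell (tidx r, tidx s) (S (3 * r - t2R (tidx r)) (3 * s - t2R (tidx s))).
Proof. intros H. rewrite <- (proj2 (proj1 Hini) r s H). reflexivity. Qed.

Lemma cell_decomp w : exists c w', w = cell c w'.
Proof.
  apply (initial_algebra_ind W lam HW Hini (fun w => exists c w', w = cell c w')).
  - intros r s H. rewrite S_cell by auto. eauto.
  - intros n w' _. exists n, w'. reflexivity.
Qed.

(* Equal positions force the two cells to coincide or be adjacent, so [tgen] applies. *)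
Lemma cell_S_glue c c' e1 e2 f1 f2 : inM0 e1 e2 -> inM0 f1 f2 ->
  third (fst c) e1 = third (fst c') f1 -> third (snd c) e2 = third (snd c') f2 ->
  fst c = fst c' \/ snd c = snd c' -> cell c (S e1 e2) = cell c' (S f1 f2).
Proof.
  intros He Hf E1 E2 Hline. destruct (inM0_inI _ _ He), (inM0_inI _ _ Hf).
  destruct c as [cx cy], c' as [dx dy]; simpl in *. unfold third in E1, E2.
  destruct (N_eq_dec (cx, cy) (dx, dy)) as [Eq|Ne].
  - injection Eq as -> ->. replace f1 with e1 by lra. replace f2 with e2 by lra.
    reflexivity.
  - unfold cell. f_equal. apply tcls_eq, rst_step.
    exists e1, e2, f1, f2. simpl.
    do 4 (split; [auto|]). split; [|split; lra].
    unfold adjacent; simpl. destruct Hline as [<- | <-]; [left | right]; split; auto.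
    + destruct (t2R_adjacent cy dy e2 f2) as [<-|]; auto; [lra | congruence].
    + destruct (t2R_adjacent cx dx e1 f1) as [<-|]; auto; [lra | congruence].
Qed.

Lemma S_eq_cell p1 p2 cx cy e1 e2 : inM0 p1 p2 -> inM0 e1 e2 ->
  p1 = third cx e1 -> p2 = third cy e2 -> S p1 p2 = cell (cx, cy) (S e1 e2).
Proof.
  intros Hp He E1 E2. rewrite S_cell by auto. destruct (inM0_inI _ _ He).
  apply cell_S_glue; simpl; auto using tidx_M0; try (rewrite third_tidx; auto).
  subst. destruct Hp as [_ [_ [Hq|[Hq|[Hq|Hq]]]]]; [left|left|right|right];
    apply tidx_third_corner; auto.
Qed.

Definition row_short t := d (S 0 t) (S 1 t) <= 1.
Definition col_short t := d (S t 0) (S t 1) <= 1.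

Ltac solve_inM0 :=
  let side := first [ left; reflexivity | right; reflexivity | unfold inI in *; lra ] in
  first [ apply inM0_vedge; side; side | apply inM0_hedge; side; side ].

(* The row at height [third b t] is the concatenation of the rows at height [t] of the
   three cells in row [b], each shrunk by a factor 3. *)
Lemma row_short_third b t : inI t -> row_short t -> row_short (third b t).
Proof.
  unfold row_short. intros Ht HT.
  assert (Hb : inI (third b t)) by (apply third_in; auto).
  rewrite (S_eq_cell 0 (third b t) T0 b 0 t), (S_eq_cell 1 (third b t) T2 b 1 t)
    by (try solve_inM0; unfold third; simpl; lra).
  assert (E1 : cell (T0, b) (S 1 t) = cell (T1, b) (S 0 t))
    by (apply cell_S_glue; try solve_inM0; auto; unfold third; simpl; lra).
  assert (E2 : cell (T1, b) (S 1 t) = cell (T2, b) (S 0 t))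
    by (apply cell_S_glue; try solve_inM0; auto; unfold third; simpl; lra).
  pose proof (dist_triangle W HW (cell (T0, b) (S 0 t)) (cell (T0, b) (S 1 t))
                (cell (T2, b) (S 1 t))).
  pose proof (dist_triangle W HW (cell (T1, b) (S 0 t)) (cell (T1, b) (S 1 t))
                (cell (T2, b) (S 1 t))).
  pose proof (dist_cell (T0, b) (S 0 t) (S 1 t)).
  pose proof (dist_cell (T1, b) (S 0 t) (S 1 t)).
  pose proof (dist_cell (T2, b) (S 0 t) (S 1 t)).
  rewrite E1, E2 in *. lra.
Qed.

Lemma col_short_third b t : inI t -> col_short t -> col_short (third b t).
Proof.
  unfold col_short. intros Ht HT.
  assert (Hb : inI (third b t)) by (apply third_in; auto).
  rewrite (S_eq_cell (third b t) 0 b T0 t 0), (S_eq_cell (third b t) 1 b T2 t 1)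
    by (try solve_inM0; unfold third; simpl; lra).
  assert (E1 : cell (b, T0) (S t 1) = cell (b, T1) (S t 0))
    by (apply cell_S_glue; try solve_inM0; auto; unfold third; simpl; lra).
  assert (E2 : cell (b, T1) (S t 1) = cell (b, T2) (S t 0))
    by (apply cell_S_glue; try solve_inM0; auto; unfold third; simpl; lra).
  pose proof (dist_triangle W HW (cell (b, T0) (S t 0)) (cell (b, T0) (S t 1))
                (cell (b, T2) (S t 1))).
  pose proof (dist_triangle W HW (cell (b, T1) (S t 0)) (cell (b, T1) (S t 1))
                (cell (b, T2) (S t 1))).
  pose proof (dist_cell (b, T0) (S t 0) (S t 1)).
  pose proof (dist_cell (b, T1) (S t 0) (S t 1)).
  pose proof (dist_cell (b, T2) (S t 0) (S t 1)).
  rewrite E1, E2 in *. lra.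
Qed.

Lemma dist_S_opposite_vedges t t' : inI t -> inI t' ->
  d (S 0 t) (S 1 t') <= 1 + Rabs (t - t').
Proof.
  intros Ht Ht'. apply Rle_plus_epsilon. intros eps Heps.
  destruct (small_pow (1/3)) with (eps := eps/2) as [k Hk]; [lra|lra|].
  assert (H0 : row_short 0).
  { unfold row_short. rewrite dist_S_hedge by (auto; unfold inI; lra). split_Rabs; lra. }
  destruct (self_similar_dense row_short H0 row_short_third k t Ht)
    as [tau [Htau [HT Hdt]]].
  pose proof (dist_triangle W HW (S 0 t) (S 0 tau) (S 1 t')).
  pose proof (dist_triangle W HW (S 0 tau) (S 1 tau) (S 1 t')).
  rewrite !dist_S_vedge in * by auto. unfold row_short in HT. split_Rabs; lra.
Qed.

Lemma dist_S_opposite_hedges t t' : inI t -> inI t' ->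
  d (S t 0) (S t' 1) <= 1 + Rabs (t - t').
Proof.
  intros Ht Ht'. apply Rle_plus_epsilon. intros eps Heps.
  destruct (small_pow (1/3)) with (eps := eps/2) as [k Hk]; [lra|lra|].
  assert (H0 : col_short 0).
  { unfold col_short. rewrite dist_S_vedge by (auto; unfold inI; lra). split_Rabs; lra. }
  destruct (self_similar_dense col_short H0 col_short_third k t Ht)
    as [tau [Htau [HT Hdt]]].
  pose proof (dist_triangle W HW (S t 0) (S tau 0) (S t' 1)).
  pose proof (dist_triangle W HW (S tau 0) (S tau 1) (S t' 1)).
  rewrite !dist_S_hedge in * by auto. unfold col_short in HT. split_Rabs; lra.
Qed.

Lemma dist_S_via_corner i j r s : (i = 0 \/ i = 1) -> (j = 0 \/ j = 1) -> inI r -> inI s ->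
  d (S i r) (S s j) <= Rabs (i - s) + Rabs (r - j).
Proof.
  intros Hi Hj Hr Hs. assert (inI i /\ inI j) as [] by (unfold inI; lra).
  pose proof (dist_triangle W HW (S i r) (S i j) (S s j)).
  rewrite dist_S_vedge, dist_S_hedge in * by auto. split_Rabs; lra.
Qed.

Lemma dist_S_le_taxicab a1 a2 b1 b2 : inM0 a1 a2 -> inM0 b1 b2 ->
  d (S a1 a2) (S b1 b2) <= Rabs (a1 - b1) + Rabs (a2 - b2).
Proof.
  intros [Ha1 [Ha2 Ha]] [Hb1 [Hb2 Hb]].
  assert (inI 0 /\ inI 1) as [] by (unfold inI; lra).
  (* same side: (sq1); adjacent sides: through their common corner *)
  destruct Ha as [-> | [-> | [-> | ->]]], Hb as [-> | [-> | [-> | ->]]];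
  first
    [ rewrite dist_S_vedge by auto; split_Rabs; lra
    | rewrite dist_S_hedge by auto; split_Rabs; lra
    | eapply Rle_trans; [apply dist_S_via_corner; auto|]; split_Rabs; lra
    | rewrite (dist_sym W HW); eapply Rle_trans; [apply dist_S_via_corner; auto|];
        split_Rabs; lra
    | eapply Rle_trans; [apply dist_S_opposite_vedges; auto|]; split_Rabs; lra
    | rewrite (dist_sym W HW); eapply Rle_trans; [apply dist_S_opposite_vedges; auto|];
        split_Rabs; lra
    | eapply Rle_trans; [apply dist_S_opposite_hedges; auto|]; split_Rabs; lra
    | rewrite (dist_sym W HW); eapply Rle_trans; [apply dist_S_opposite_hedges; auto|];
        split_Rabs; lra ].
Qed.

Definition in_cell (c : Defs.N) x :=
  t2R (fst c) <= 3 * hx x <= t2R (fst c) + 1 /\ t2R (snd c) <= 3 * hy x <= t2R (snd c) + 1.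

Definition boundary_slack (c : Defs.N) eps x :=
  forall e1 e2, inM0 e1 e2 -> d x (cell c (S e1 e2)) <= dh x (cell c (S e1 e2)) + eps.

Lemma in_cell_cell c w : in_cell c (cell c w).
Proof.
  unfold in_cell. destruct (h_cell c w) as [-> ->].
  pose proof (ux_in (h w)). pose proof (uy_in (h w)). unfold third, inI in *. lra.
Qed.

Lemma boundary_slack_S c e1 e2 : inM0 e1 e2 -> boundary_slack c 0 (cell c (S e1 e2)).
Proof.
  intros He f1 f2 Hf. eapply Rle_trans; [apply dist_cell|].
  pose proof (dist_S_le_taxicab e1 e2 f1 f2 He Hf).
  rewrite U0dist_coords.
  destruct (h_cell_S c e1 e2 He) as [-> ->], (h_cell_S c f1 f2 Hf) as [-> ->].
  unfold third. split_Rabs; lra.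
Qed.

(* The last conjunct puts the exit point on a taxicab geodesic from [x] to [y]. *)
Definition exits_toward (c m : Defs.N) eps x y :=
  exists c' f1 f2, inM0 f1 f2 /\ (cell_gap c' m < cell_gap c m)%nat /\
    d x (cell c' (S f1 f2)) <= dh x (cell c' (S f1 f2)) + eps /\
    dh x (cell c' (S f1 f2)) + dh (cell c' (S f1 f2)) y = dh x y.

(* Leave [c] through its side facing [m], at the height (resp. abscissa) of [x]. *)
Lemma exit_cell_x c m x y eps : in_cell c x -> boundary_slack c eps x -> in_cell m y ->
  fst c <> fst m -> exits_toward c m eps x y.
Proof.
  destruct c as [cx cy], m as [mx my]. intros [Hx1 Hx2] HL [Hy1 Hy2] Hne; simpl in *.
  set (t := 3 * hy x - t2R cy). assert (Ht : inI t) by (unfold t, inI; lra).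
  destruct (Rlt_le_dec (t2R cx) (t2R mx)) as [Lt|Ge].
  - destruct (succ3_toward cx mx Lt) as [E1 [E2 E3]].
    assert (Eq : cell (cx, cy) (S 1 t) = cell (succ3 cx, cy) (S 0 t))
      by (apply cell_S_glue; try solve_inM0; auto; unfold third; simpl; lra).
    exists (succ3 cx, cy), 0, t. rewrite <- Eq, !U0dist_coords.
    split; [solve_inM0|]. split; [unfold cell_gap; simpl; lia|].
    split; [apply HL; solve_inM0|].
    destruct (h_cell_S (cx, cy) 1 t) as [-> ->]; [solve_inM0|].
    unfold third, t; simpl. split_Rabs; lra.
  - assert (Lt : t2R mx < t2R cx) by (apply t2R_lt_of_ne; congruence || lra).
    destruct (pred3_toward cx mx Lt) as [E1 [E2 E3]].
    assert (Eq : cell (cx, cy) (S 0 t) = cell (pred3 cx, cy) (S 1 t))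
      by (apply cell_S_glue; try solve_inM0; auto; unfold third; simpl; lra).
    exists (pred3 cx, cy), 1, t. rewrite <- Eq, !U0dist_coords.
    split; [solve_inM0|]. split; [unfold cell_gap; simpl; lia|].
    split; [apply HL; solve_inM0|].
    destruct (h_cell_S (cx, cy) 0 t) as [-> ->]; [solve_inM0|].
    unfold third, t; simpl. split_Rabs; lra.
Qed.

Lemma exit_cell_y c m x y eps : in_cell c x -> boundary_slack c eps x -> in_cell m y ->
  snd c <> snd m -> exits_toward c m eps x y.
Proof.
  destruct c as [cx cy], m as [mx my]. intros [Hx1 Hx2] HL [Hy1 Hy2] Hne; simpl in *.
  set (t := 3 * hx x - t2R cx). assert (Ht : inI t) by (unfold t, inI; lra).
  destruct (Rlt_le_dec (t2R cy) (t2R my)) as [Lt|Ge].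
  - destruct (succ3_toward cy my Lt) as [E1 [E2 E3]].
    assert (Eq : cell (cx, cy) (S t 1) = cell (cx, succ3 cy) (S t 0))
      by (apply cell_S_glue; try solve_inM0; auto; unfold third; simpl; lra).
    exists (cx, succ3 cy), t, 0. rewrite <- Eq, !U0dist_coords.
    split; [solve_inM0|]. split; [unfold cell_gap; simpl; lia|].
    split; [apply HL; solve_inM0|].
    destruct (h_cell_S (cx, cy) t 1) as [-> ->]; [solve_inM0|].
    unfold third, t; simpl. split_Rabs; lra.
  - assert (Lt : t2R my < t2R cy) by (apply t2R_lt_of_ne; congruence || lra).
    destruct (pred3_toward cy my Lt) as [E1 [E2 E3]].
    assert (Eq : cell (cx, cy) (S t 0) = cell (cx, pred3 cy) (S t 1))
      by (apply cell_S_glue; try solve_inM0; auto; unfold third; simpl; lra).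
    exists (cx, pred3 cy), t, 1. rewrite <- Eq, !U0dist_coords.
    split; [solve_inM0|]. split; [unfold cell_gap; simpl; lia|].
    split; [apply HL; solve_inM0|].
    destruct (h_cell_S (cx, cy) t 0) as [-> ->]; [solve_inM0|].
    unfold third, t; simpl. split_Rabs; lra.
Qed.

Lemma exit_cell c m x y eps : in_cell c x -> boundary_slack c eps x -> in_cell m y ->
  c <> m -> exits_toward c m eps x y.
Proof.
  intros Hx HL Hy Hne. destruct (three_eq_dec (fst c) (fst m)) as [E|E].
  - apply exit_cell_y; auto. intros E'. apply Hne, injective_projections; auto.
  - apply exit_cell_x; auto.
Qed.

Lemma walk_to_cell k : forall c m x y eps, (cell_gap c m <= k)%nat ->
  (exists e1 e2, inM0 e1 e2 /\ x = cell c (S e1 e2)) ->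
  in_cell m y -> boundary_slack m eps y -> d x y <= dh x y + eps.
Proof.
  induction k as [|k IH]; intros c m x y eps Hk [e1 [e2 [He ->]]] Hy HL;
    (destruct (N_eq_dec c m) as [<-|Hne];
     [rewrite (dist_sym W HW), (dist_sym U0 U0_is_square); apply HL; auto|]).
  - exfalso. apply Hne, cell_gap_0. lia.
  - destruct (exit_cell c m _ y 0 (in_cell_cell c _) (boundary_slack_S c e1 e2 He) Hy Hne)
      as [c' [f1 [f2 [Hf [Hlt [Hd Hgeo]]]]]].
    assert (Hz : d (cell c' (S f1 f2)) y <= dh (cell c' (S f1 f2)) y + eps)
      by (apply (IH c' m); eauto; lia).
    pose proof (dist_triangle W HW (cell c (S e1 e2)) (cell c' (S f1 f2)) y). lra.
Qed.

(* A uniform excess [gam] of [d] over [dh] shrinks to [gam / 3] inside each cell, and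
   only the first and the last cell of a geodesic cell walk contribute. *)
Lemma slack_contract gam : 0 <= gam -> (forall x y, d x y <= dh x y + gam) ->
  forall x y, d x y <= dh x y + 2 * gam / 3.
Proof.
  intros Hg H x y.
  destruct (cell_decomp x) as [c [x' ->]], (cell_decomp y) as [m [y' ->]].
  assert (Hshrink : forall c u v,
             d (cell c u) (cell c v) <= dh (cell c u) (cell c v) + gam / 3).
  { intros c0 u v. eapply Rle_trans; [apply dist_cell|]. pose proof (H u v) as Huv.
    rewrite !U0dist_coords in *. destruct (h_cell c0 u) as [-> ->], (h_cell c0 v) as [-> ->].
    unfold third. split_Rabs; lra. }
  destruct (N_eq_dec c m) as [<-|Hne]; [eapply Rle_trans; [apply Hshrink|]; lra|].
  assert (Hslack : forall c0 w, boundary_slack c0 (gam / 3) (cell c0 w))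
    by (intros c0 w e1 e2 _; apply Hshrink).
  destruct (exit_cell c m (cell c x') (cell m y') (gam / 3) (in_cell_cell c _) (Hslack c x')
              (in_cell_cell m _) Hne) as [c' [f1 [f2 [Hf [_ [Hd Hgeo]]]]]].
  assert (Hz : d (cell c' (S f1 f2)) (cell m y')
               <= dh (cell c' (S f1 f2)) (cell m y') + gam / 3)
    by (apply (walk_to_cell (cell_gap c' m) c' m); eauto using in_cell_cell).
  pose proof (dist_triangle W HW (cell c x') (cell c' (S f1 f2)) (cell m y')). lra.
Qed.

Lemma h_isometry x y : d x y = dh x y.
Proof.
  assert (Hn : forall n x y, d x y <= dh x y + 2 * (2/3) ^ n).
  { induction n as [|n IH]; intros x' y'.
    - pose proof (dist_le2 W HW x' y'). pose proof (dist_ge0 U0 U0_is_square (h x') (h y')).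
      change (sq_dist U0) with U0dist in *. simpl. lra.
    - replace (2 * (2/3) ^ Datatypes.S n) with (2 * (2 * (2/3) ^ n) / 3) by (simpl; field).
      apply slack_contract; auto. pose proof (pow_le (2/3) n). lra. }
  apply Rle_antisym; [|apply (proj1 Hh)].
  apply Rle_plus_epsilon. intros eps Heps.
  destruct (small_pow (2/3)) with (eps := eps/2) as [k Hk]; [lra|lra|].
  pose proof (Hn k x y). lra.
Qed.

Lemma h_dense k : forall u : U0car, exists w, U0dist (h w) u <= 2 * (1/3) ^ k.
Proof.
  induction k as [|k IH]; intros u.
  - exists (S 0 0). rewrite U0dist_coords. destruct (h_S 0 0 inM0_00) as [-> ->].
    pose proof (ux_in u). pose proof (uy_in u). unfold inI in *. simpl. split_Rabs; lra.
  - set (u' := exist (fun p : R * R => inI (fst p) /\ inI (snd p))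
                 (3 * ux u - t2R (tidx (ux u)), 3 * uy u - t2R (tidx (uy u)))
                 (conj (tidx_in _ (ux_in u)) (tidx_in _ (uy_in u))) : U0car).
    destruct (IH u') as [w' Hw']. rewrite U0dist_coords in Hw'.
    change (ux u') with (3 * ux u - t2R (tidx (ux u))) in Hw'.
    change (uy u') with (3 * uy u - t2R (tidx (uy u))) in Hw'.
    exists (cell (tidx (ux u), tidx (uy u)) w'). rewrite U0dist_coords.
    destruct (h_cell (tidx (ux u), tidx (uy u)) w') as [-> ->]. simpl.
    assert (E : forall a t, third (tidx a) t - a = (t - (3 * a - t2R (tidx a))) / 3)
      by (intros; unfold third; field).
    rewrite !E. split_Rabs; lra.
Qed.

End Geometry.

(** * The completion *)

Lemma is_lim_seq_Rabs_bound (u e : nat -> R) (l : R) :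
  (forall n, Rabs (u n - l) <= e n) -> is_lim_seq e 0 -> is_lim_seq u l.
Proof.
  intros H He. apply is_lim_seq_le_le with (u := fun n => l - e n) (w := fun n => l + e n).
  - intros n. specialize (H n). split_Rabs; lra.
  - replace (Finite l) with (Finite (l - 0)) by (f_equal; lra).
    apply is_lim_seq_minus'; auto. apply is_lim_seq_const.
  - replace (Finite l) with (Finite (l + 0)) by (f_equal; lra).
    apply is_lim_seq_plus'; auto. apply is_lim_seq_const.
Qed.

Lemma is_lim_seq_clamp (u : nat -> R) : (forall n, inI (u n)) -> ex_finite_lim_seq u ->
  is_lim_seq u (clamp (real (Lim_seq u))).
Proof.
  intros Hu [l Hl]. rewrite (is_lim_seq_unique _ _ Hl). simpl.
  assert (inI l) as Hin.
  { split.
    - exact (is_lim_seq_le _ u 0 l (fun n => proj1 (Hu n)) (is_lim_seq_const 0) Hl).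
    - exact (is_lim_seq_le u _ l 1 (fun n => proj2 (Hu n)) Hl (is_lim_seq_const 1)). }
  rewrite clamp_id; auto.
Qed.

Lemma pow_le_compat_le1 q k m : 0 <= q <= 1 -> (k <= m)%nat -> q ^ m <= q ^ k.
Proof.
  intros Hq Hkm. induction Hkm; [lra|]. simpl. pose proof (pow_le q m (proj1 Hq)). nra.
Qed.

Section CauchyClasses.
Variable X : sqdata.
Hypothesis HX : IsSquaMS X.
Local Notation d := (sq_dist X).

Lemma ceqv_refl u : Defs.cauchy X u -> ceqv X u u.
Proof.
  intros Hu. repeat split; auto.
  apply is_lim_seq_ext with (u := fun _ => 0); [intros; rewrite dist_xx; auto|].
  apply is_lim_seq_const.
Qed.

Lemma ceqv_sym u v : ceqv X u v -> ceqv X v u.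
Proof.
  intros [Hu [Hv Hl]]. repeat split; auto.
  apply is_lim_seq_ext with (u := fun n => d (u n) (v n)); auto. intros; apply dist_sym; auto.
Qed.

Lemma ceqv_trans u v w : ceqv X u v -> ceqv X v w -> ceqv X u w.
Proof.
  intros [Hu [Hv Hl1]] [_ [Hw Hl2]]. repeat split; auto.
  apply is_lim_seq_Rabs_bound with (e := fun n => d (u n) (v n) + d (v n) (w n)).
  - intros n. pose proof (dist_triangle X HX (u n) (v n) (w n)).
    pose proof (dist_ge0 X HX (u n) (w n)). split_Rabs; lra.
  - replace (Finite 0) with (Finite (0 + 0)) by (f_equal; lra). apply is_lim_seq_plus'; auto.
Qed.

Lemma crep_spec (A : ccar X) :
  Defs.cauchy X (crep X A) /\ forall v, proj1_sig A v <-> ceqv X (crep X A) v.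
Proof.
  unfold crep. destruct (constructive_indefinite_description _ _) as [a Ha]. exact Ha.
Qed.

Lemma crep_in (A : ccar X) : proj1_sig A (crep X A).
Proof. apply (proj2 (crep_spec A)), ceqv_refl, crep_spec. Qed.

Lemma ccar_ext (A B : ccar X) : is_lim_seq (fun n => d (crep X A n) (crep X B n)) 0 -> A = B.
Proof.
  intros Hl. destruct (crep_spec A) as [HA EA], (crep_spec B) as [HB EB].
  assert (Hab : ceqv X (crep X A) (crep X B)) by (repeat split; auto).
  apply sig_pred_ext. intros v. rewrite EA, EB. split; intros H.
  - eapply ceqv_trans; [apply ceqv_sym|]; eauto.
  - eapply ceqv_trans; eauto.
Qed.

End CauchyClasses.

Lemma cauchy_short X Y (f : sq_car X -> sq_car Y) u :
  (forall x y, sq_dist Y (f x) (f y) <= sq_dist X x y) ->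
  Defs.cauchy X u -> Defs.cauchy Y (fun n => f (u n)).
Proof.
  intros Hf Hu eps He. destruct (Hu eps He) as [M HM]. exists M. intros m n Hm Hn.
  eapply Rle_lt_trans; [apply Hf | apply HM; auto].
Qed.

Definition U0_converges (u : nat -> U0car) (p : U0car) : Prop :=
  is_lim_seq (fun n => ux (u n)) (ux p) /\ is_lim_seq (fun n => uy (u n)) (uy p).

Lemma U0_converges_unique u p q : U0_converges u p -> U0_converges u q -> p = q.
Proof.
  intros [Hpx Hpy] [Hqx Hqy].
  apply U0_eq; [apply is_lim_seq_unique in Hpx, Hqx | apply is_lim_seq_unique in Hpy, Hqy];
    congruence.
Qed.

Lemma U0_converges_dist u p : is_lim_seq (fun n => U0dist (u n) p) 0 -> U0_converges u p.
Proof.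
  intros Hl. split; apply is_lim_seq_Rabs_bound with (e := fun n => U0dist (u n) p); auto;
    intros n; rewrite U0dist_coords; split_Rabs; lra.
Qed.

Lemma U0dist_lim u v p q : U0_converges u p -> U0_converges v q ->
  is_lim_seq (fun n => U0dist (u n) (v n)) (U0dist p q).
Proof.
  intros [Hpx Hpy] [Hqx Hqy].
  apply is_lim_seq_ext with
    (u := fun n => Rabs (ux (u n) - ux (v n)) + Rabs (uy (u n) - uy (v n))); [reflexivity|].
  apply is_lim_seq_plus'; apply (is_lim_seq_abs _ (Finite (_ - _)));
    apply is_lim_seq_minus'; auto.
Qed.

Definition U0_lim (u : nat -> U0car) : U0car :=
  exist _ (clamp (real (Lim_seq (fun n => ux (u n)))),
           clamp (real (Lim_seq (fun n => uy (u n)))))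
    (conj (clamp_in _) (clamp_in _)).

Lemma U0_lim_converges u : Defs.cauchy U0 u -> U0_converges u (U0_lim u).
Proof.
  intros Hu.
  split; apply is_lim_seq_clamp; auto using ux_in, uy_in; apply ex_lim_seq_cauchy_corr;
    intros eps; destruct (Hu eps (cond_pos eps)) as [M HM]; exists M; intros n m Hn Hm;
    specialize (HM n m Hn Hm); simpl in HM; rewrite U0dist_coords in HM;
    split_Rabs; lra.
Qed.

Section CompletionIso.
Variable W : sqdata.
Variable lam : sq_car (tensor W) -> sq_car W.
Hypothesis HW : IsSquaMS W.
Hypothesis Hini : is_initial_algebra W lam.
Variable h : sq_car W -> U0car.
Hypothesis Hh : is_hom W U0 h.
Hypothesis Hhl : forall z, h (lam z) = U0_alg (tensor_map W U0 h z).

Local Notation d := (sq_dist W).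
Let h_isom := h_isometry W lam HW Hini h Hh Hhl.

Definition hbar (A : ccar W) : U0car := U0_lim (fun n => h (crep W A n)).

Lemma hbar_converges A : U0_converges (fun n => h (crep W A n)) (hbar A).
Proof. apply U0_lim_converges, cauchy_short, crep_spec. apply (proj1 Hh). Qed.

Lemma dist_crep_lim A B :
  is_lim_seq (fun n => d (crep W A n) (crep W B n)) (U0dist (hbar A) (hbar B)).
Proof.
  apply is_lim_seq_ext with (u := fun n => U0dist (h (crep W A n)) (h (crep W B n))).
  - intros n. symmetry. apply h_isom.
  - apply U0dist_lim; apply hbar_converges.
Qed.

Lemma cdist_hbar A B : cdist W A B = U0dist (hbar A) (hbar B).
Proof. unfold cdist. rewrite (is_lim_seq_unique _ _ (dist_crep_lim A B)). reflexivity. Qed.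

Lemma hbar_inj A B : hbar A = hbar B -> A = B.
Proof.
  intros E. apply (ccar_ext W HW). pose proof (dist_crep_lim A B) as L.
  rewrite E, (dist_xx U0 U0_is_square) in L. exact L.
Qed.

Lemma hbar_S r s : inM0 r s -> hbar (csqm W HW r s) = U0map r s.
Proof.
  intros H. apply (U0_converges_unique (fun n => h (crep W (csqm W HW r s) n)));
    [apply hbar_converges | apply U0_converges_dist].
  destruct (crep_in W HW (csqm W HW r s)) as [_ [_ Hl]].
  apply is_lim_seq_ext with (u := fun n => d (sq_map W r s) (crep W (csqm W HW r s) n)); auto.
  intros n. change (U0map r s) with (sq_map U0 r s).
  rewrite <- (proj2 Hh r s H), h_isom. apply (dist_sym U0 U0_is_square).
Qed.

Lemma cauchy_of_h_close u v : (forall k, U0dist (h (v k)) u <= 2 * (1/3) ^ k) ->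
  Defs.cauchy W v.
Proof.
  intros Hv eps He. destruct (small_pow (1/3)) with (eps := eps/4) as [k Hk]; [lra|lra|].
  exists k. intros m n Hm Hn. rewrite h_isom.
  pose proof (dist_triangle U0 U0_is_square (h (v m)) u (h (v n))).
  rewrite (dist_sym U0 U0_is_square u) in H. simpl in H.
  pose proof (Hv m). pose proof (Hv n).
  pose proof (pow_le_compat_le1 (1/3) k m ltac:(lra) Hm).
  pose proof (pow_le_compat_le1 (1/3) k n ltac:(lra) Hn). lra.
Qed.

Lemma hbar_surj u : exists A, hbar A = u.
Proof.
  destruct (choice (fun k w => U0dist (h w) u <= 2 * (1/3) ^ k)
             (fun k => h_dense W lam h Hh Hhl k u)) as [v Hv].
  pose proof (cauchy_of_h_close u v Hv) as Hc.
  exists (exist _ (fun v' => ceqv W v v') (ex_intro _ v (conj Hc (fun v' => iff_refl _)))).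
  set (A := exist _ _ _). apply (U0_converges_unique (fun n => h (crep W A n)));
    [apply hbar_converges | apply U0_converges_dist].
  destruct (crep_in W HW A) as [_ [_ Hl]].
  apply is_lim_seq_le_le
    with (u := fun _ => 0) (w := fun k => d (v k) (crep W A k) + 2 * (1/3) ^ k).
  - intros k. split; [apply (dist_ge0 U0 U0_is_square)|].
    pose proof (dist_triangle U0 U0_is_square (h (crep W A k)) (h (v k)) u) as T.
    rewrite <- h_isom, (dist_sym W HW) in T.
    pose proof (Hv k). simpl in *. lra.
  - apply is_lim_seq_const.
  - replace (Finite 0) with (Finite (0 + 2 * 0)) by (f_equal; lra).
    apply is_lim_seq_plus'; [exact Hl|]. apply (is_lim_seq_scal_l _ 2 0).
    apply is_lim_seq_geom. split_Rabs; lra.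
Qed.

Lemma completion_iso_U0 : sq_iso (completion W HW) U0.
Proof.
  destruct (choice (fun u A => hbar A = u) hbar_surj) as [g Hg].
  exists hbar, g. repeat split.
  - intros A B. simpl. rewrite cdist_hbar. lra.
  - intros r s H. apply hbar_S; auto.
  - intros u v. simpl. rewrite cdist_hbar, !Hg. lra.
  - intros r s H. apply hbar_inj. simpl. rewrite Hg, hbar_S; auto.
  - intros A. apply hbar_inj. rewrite Hg. auto.
  - intros u. apply Hg.
Qed.

End CompletionIso.

Theorem mainTheorem9 :
  forall (W : sqdata) (lam : sq_car (tensor W) -> sq_car W) (HW : IsSquaMS W),
    is_initial_algebra W lam ->
    sq_iso (completion W HW) U0.
Proof.
  intros W lam HW Hini.
  destruct (proj2 Hini U0 U0_alg U0_is_square U0_alg_hom) as [h [[Hh Hhl] _]].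
  exact (completion_iso_U0 W lam HW Hini h Hh Hhl).
Qed.
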